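(* Let $\ell_1,\ell_2,\ell_3\ge1$. Let $\mathcal A_{\ell_1,\ell_2,\ell_3}\subset\mathbb R^{\ell_1+\ell_2+\ell_3}$ (coordinates $x_1,\dots,x_{\ell_1},y_1,\dots,y_{\ell_2},z_1,\dots,z_{\ell_3}$) be the arrangement of hyperplanes $x_i+y_j+z_k=0$ (all $i,j,k$), $x_{i_1}=x_{i_2}$ ($i_1<i_2$), $y_{j_1}=y_{j_2}$ ($j_1<j_2$), $z_{k_1}=z_{k_2}$ ($k_1<k_2$). Let $\mathcal H\subset\mathbb R^{\ell_1+\ell_2+\ell_3-2}$ (coordinates $x'_1,\dots,x'_{\ell_1-1},y'_1,\dots,y'_{\ell_2-1},z'_1,\dots,z'_{\ell_3}$) be the arrangement of hyperplanes $x'_i=0$, $y'_j=0$, $z'_k=0$, $x'_i+z'_k=0$, $y'_j+z'_k=0$, $x'_i+y'_j+z'_k=0$, $x'_{i_1}=x'_{i_2}$ ($i_1<i_2$), $y'_{j_1}=y'_{j_2}$ ($j_1<j_2$), $z'_{k_1}=z'_{k_2}$ ($k_1<k_2$), for all indices $1\le i\le\ell_1-1$, $1\le j\le\ell_2-1$, $1\le k\le\ell_3$. Then $\chi_{\mathcal A_{\ell_1,\ell_2,\ell_3}}(t)=t^2\chi_{\mathcal H}(t)$; in particular both arrangements have the same number of chambers.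
   Context: For a hyperplane arrangement $\mathcal H$ in $\mathbb R^m$, $L(\mathcal H)$ is the poset of nonempty intersections of hyperplanes (including $\mathbb R^m$), ordered by reverse inclusion, with Möbius function $\mu(\mathbb R^m)=1$, $\mu(x)=-\sum_{y<x}\mu(y)$; the characteristic polynomial is $\chi_{\mathcal H}(t)=\sum_{x\in L(\mathcal H)}\mu(x)t^{\dim x}$. (The arrangement $\mathcal H$ is the arrangement $\mathcal H_A$ attached to $\overline{\mathcal O^{\min}}(\{\ell_1,\ell_2,\ell_3\})$.) *)

From HB Require Import structures.
From mathcomp Require Import all_boot all_order all_algebra.
From Stdlib Require Import ClassicalEpsilon.
Set Implicit Arguments. Unset Strict Implicit. Unset Printing Implicit Defensive.
Import Order.TTheory GRing.Theory Num.Theory.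
Local Open Scope ring_scope.

(* A central hyperplane arrangement in R^m is given by a list of normal
   vectors a : 'rV_m ; the hyperplane is {x | x . a = 0}. *)

Section Lattice.
Variables (R : fieldType) (m : nat).

(* the intersection of the hyperplanes indexed by T, as a canonical
   (genmx) row space; T = set0 gives the whole space R^m *)
Definition flat (A : seq 'rV[R]_m) (T : {set 'I_(size A)}) : 'M[R]_m :=
  (<< kermx (\matrix_(i < m, j < size A)
               (if j \in T then (A`_j) 0 i else 0)) >>)%MS.

Definition intersection_poset (A : seq 'rV[R]_m) : seq 'M[R]_m :=
  undup [seq flat T | T <- enum [set: {set 'I_(size A)}]].

(* Moebius function from the bottom R^m, ordered by reverse inclusion:
   mu(R^m) = 1, mu(x) = - sum_{y < x} mu(y), where y < x means that the
   subspace y strictly contains x.  The recursion is computed with fuel;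
   fuel m.+1 suffices since every strict chain has length <= m. *)
Fixpoint mobius_rec (L : seq 'M[R]_m) (fuel : nat) (x : 'M[R]_m) : int :=
  match fuel with
  | 0 => 0
  | f.+1 => if (1%:M <= x)%MS then 1
            else - \sum_(y <- L | (x < y)%MS) mobius_rec L f y
  end.

Definition mobius (A : seq 'rV[R]_m) (x : 'M[R]_m) : int :=
  mobius_rec (intersection_poset A) m.+1 x.

Definition char_poly_arr (A : seq 'rV[R]_m) : {poly int} :=
  \sum_(x <- intersection_poset A) (mobius A x)%:P * 'X^(\rank x).

End Lattice.

Definition decP (P : Prop) : bool :=
  if excluded_middle_informative P then true else false.

Section Chambers.
Variables (R : realFieldType) (m : nat).

Definition chamber_sign (A : seq 'rV[R]_m) (s : {ffun 'I_(size A) -> bool}) : Prop :=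
  exists x : 'rV[R]_m, forall i : 'I_(size A),
    ((x *m (A`_i)^T) 0 0 != 0) /\ ((0 < (x *m (A`_i)^T) 0 0) = s i).

Definition nchambers (A : seq 'rV[R]_m) : nat :=
  #|[set s : {ffun 'I_(size A) -> bool} | decP (chamber_sign s)]|.

End Chambers.

Section Coords.
Variables (R : pzRingType) (a b c : nat).
(* coordinates of R^(a+b+c): x_1..x_a, y_1..y_b, z_1..z_c *)
Definition ex (i : 'I_a) : 'rV[R]_(a + b + c) := delta_mx 0 (lshift c (lshift b i)).
Definition ey (j : 'I_b) : 'rV[R]_(a + b + c) := delta_mx 0 (lshift c (rshift a j)).
Definition ez (k : 'I_c) : 'rV[R]_(a + b + c) := delta_mx 0 (rshift (a + b) k).

Definition diffs n (e : 'I_n -> 'rV[R]_(a + b + c)) : seq 'rV[R]_(a + b + c) :=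
  [seq e p.1 - e p.2
  | p <- [seq q <- [seq (i1, i2) | i1 <- enum 'I_n, i2 <- enum 'I_n]
         | (nat_of_ord q.1 < nat_of_ord q.2)%N]].
End Coords.

Definition arrA (R : pzRingType) (l1 l2 l3 : nat) : seq 'rV[R]_(l1 + l2 + l3) :=
  flatten [seq [seq @ex R l1 l2 l3 i + @ey R l1 l2 l3 j + @ez R l1 l2 l3 k
               | j <- enum 'I_l2, k <- enum 'I_l3] | i <- enum 'I_l1]
  ++ diffs (@ex R l1 l2 l3) ++ diffs (@ey R l1 l2 l3) ++ diffs (@ez R l1 l2 l3).

Definition arrH (R : pzRingType) (l1 l2 l3 : nat) : seq 'rV[R]_(l1.-1 + l2.-1 + l3) :=
  let X := @ex R l1.-1 l2.-1 l3 in let Y := @ey R l1.-1 l2.-1 l3 in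
  let Z := @ez R l1.-1 l2.-1 l3 in
  [seq X i | i <- enum 'I_l1.-1]
  ++ [seq Y j | j <- enum 'I_l2.-1]
  ++ [seq Z k | k <- enum 'I_l3]
  ++ [seq X i + Z k | i <- enum 'I_l1.-1, k <- enum 'I_l3]
  ++ [seq Y j + Z k | j <- enum 'I_l2.-1, k <- enum 'I_l3]
  ++ flatten [seq [seq X i + Y j + Z k | j <- enum 'I_l2.-1, k <- enum 'I_l3]
             | i <- enum 'I_l1.-1]
  ++ diffs X ++ diffs Y ++ diffs Z.

From Pilot Require Import Defs.
From HB Require Import structures.
From mathcomp Require Import all_boot all_order all_algebra.
From Stdlib Require Import ClassicalEpsilon.
From mathcomp Require Import zify.
Set Implicit Arguments. Unset Strict Implicit. Unset Printing Implicit Defensive.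
Import Order.TTheory GRing.Theory Num.Theory.
Local Open Scope ring_scope.

(** The arrangement A is not essential: it contains the plane of points with
   x_i = a, y_j = b, z_k = -a - b.  The surjective linear map
   (x, y, z) |-> (x_i - x_l1, y_j - y_l2, z_k + x_l1 + y_l2) kills this plane,
   and the hyperplanes of A are exactly the pullbacks of those of H.  Pulling
   back along a surjection R^m -> R^n identifies the intersection posets,
   preserving the order, shifting every dimension by m - n = 2, and matches
   the chambers bijectively; hence chi_A = t^2 chi_H and both arrangements
   have the same number of chambers. *)

Lemma mobius_rec_fuelS (R : fieldType) (m : nat) (L : seq 'M[R]_m) f x :
  (m < \rank x + f)%N -> mobius_rec L f.+1 x = mobius_rec L f x.
Proof.
elim: f x => [|f IH] x lt_m; first by have := rank_leq_col x; lia.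
rewrite /=; case: ifP => // _; congr (- _).
by apply: eq_bigr => y lt_xy; apply: IH; have := rank_ltmx lt_xy; lia.
Qed.

Lemma mobius_rec_fuelD (R : fieldType) (m : nat) (L : seq 'M[R]_m) f d x :
  (m < \rank x + f)%N -> mobius_rec L (f + d) x = mobius_rec L f x.
Proof.
move=> lt_m; elim: d => [|d IH]; first by rewrite addn0.
by rewrite addnS mobius_rec_fuelS ?IH //; lia.
Qed.

Lemma pullback_index (U V : nmodType) (f : U -> V) (A : seq V) (B : seq U) :
  {subset A <= map f B} ->
  exists sigma : 'I_(size A) -> 'I_(size B), forall i : 'I_(size A), A`_i = f B`_(sigma i).
Proof.
move=> sAB; suff /fin_all_exists[sigma hsigma] : forall i : 'I_(size A),
    exists j : 'I_(size B), A`_i = f B`_j by exists sigma.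
move=> i; have /sAB/mapP[b bB ->] := mem_nth 0 (ltn_ord i).
by exists (Ordinal (etrans (index_mem b B) bB)); rewrite /= nth_index.
Qed.

Lemma pushforward_index (U V : nmodType) (f : U -> V) (A : seq V) (B : seq U) :
  {subset map f B <= A} ->
  exists tau : 'I_(size B) -> 'I_(size A), forall j : 'I_(size B), f B`_j = A`_(tau j).
Proof.
move=> sBA; suff /fin_all_exists[tau htau] : forall j : 'I_(size B),
    exists i : 'I_(size A), f B`_j = A`_i by exists tau.
move=> j; have /sBA fbA := map_f f (mem_nth 0 (ltn_ord j)).
by exists (Ordinal (etrans (index_mem _ A) fbA)); rewrite /= nth_index.
Qed.

Section Flats.
Variables (R : fieldType) (m : nat).

Lemma genmx_ext (X Y : 'M[R]_m) : (<<X>> = X)%MS -> (<<Y>> = Y)%MS ->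
  (forall u : 'rV_m, (u <= X)%MS = (u <= Y)%MS) -> X = Y.
Proof.
move=> hX hY XY; rewrite -hX -hY; apply/genmxP/andP.
by split; apply/row_subP => i; [rewrite -XY | rewrite XY]; exact: row_sub.
Qed.

Lemma genmx_flat (A : seq 'rV[R]_m) (T : {set 'I_(size A)}) : (<<flat T>> = flat T)%MS.
Proof. exact: genmx_id. Qed.

Lemma sub_flat (A : seq 'rV[R]_m) (T : {set 'I_(size A)}) (u : 'rV_m) :
  (u <= flat T)%MS = [forall j in T, (u *m (A`_j)^T) 0 0 == 0].
Proof.
rewrite genmxE sub_kermx; set M := \matrix_(i, j) _.
have uME j : (u *m M) 0 j = if j \in T then (u *m (A`_j)^T) 0 0 else 0.
  rewrite !mxE; case: ifP => jT; first by apply: eq_bigr => a _; rewrite !mxE jT.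
  by apply: big1 => a _; rewrite mxE jT mulr0.
apply/eqP/forall_inP => [uM0 j jT|uT0].
  by have := uME j; rewrite jT uM0 mxE => <-.
by apply/rowP => j; rewrite uME [RHS]mxE; case: ifP => // jT; exact/eqP/uT0.
Qed.

Lemma genmx_intersection_poset (A : seq 'rV[R]_m) x :
  x \in intersection_poset A -> (<<x>> = x)%MS.
Proof. by rewrite mem_undup => /mapP[T _ ->]; rewrite genmx_flat. Qed.

End Flats.

(* A hyperplane with normal b in R^n pulls back along the surjection
   x |-> x *m P^T to the hyperplane with normal b *m P. *)
Section Pullback.
Variables (R : fieldType) (m n : nat) (P : 'M[R]_(n, m)) (Q : 'M[R]_(m, n)).
Hypothesis PQ : P *m Q = 1%:M.

Definition preimmx (y : 'M[R]_n) : 'M[R]_m := (<<kermx (P^T *m cokermx y)>>)%MS.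

Lemma mul_trQP : Q^T *m P^T = 1%:M.
Proof. by rewrite -trmx_mul PQ trmx1. Qed.

Lemma leq_rows_cols : (n <= m)%N.
Proof.
rewrite -{1}(mxrank1 R n) -mul_trQP.
exact: leq_trans (mxrankM_maxr _ _) (rank_leq_row _).
Qed.

Lemma genmx_preimmx y : (<<preimmx y>> = preimmx y)%MS.
Proof. exact: genmx_id. Qed.

Lemma sub_preimmx k (u : 'M_(k, m)) y : (u <= preimmx y)%MS = (u *m P^T <= y)%MS.
Proof. by rewrite genmxE sub_kermx submxE mulmxA. Qed.

Lemma submx_preimmx2 x y : (preimmx x <= preimmx y)%MS = (x <= y)%MS.
Proof.
have sub_xQ z : (z *m Q^T <= preimmx z)%MS by rewrite sub_preimmx -mulmxA mul_trQP mulmx1.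
apply/idP/idP => sxy.
  by have := submx_trans (sub_xQ x) sxy; rewrite sub_preimmx -mulmxA mul_trQP mulmx1.
by rewrite sub_preimmx; apply: submx_trans sxy; rewrite -sub_preimmx.
Qed.

Lemma ltmx_preimmx2 x y : (preimmx x < preimmx y)%MS = (x < y)%MS.
Proof. by rewrite !ltmxE !submx_preimmx2. Qed.

Lemma preimmx_full y : (1%:M <= preimmx y)%MS = (1%:M <= y)%MS.
Proof.
rewrite sub_preimmx mul1mx; apply/idP/idP => [sPy|]; last exact: submx_trans (submx1 _).
by apply: submx_trans sPy; rewrite -mul_trQP submxMl.
Qed.

Lemma mxrank_preimmx y : \rank (preimmx y) = (\rank y + (m - n))%N.
Proof.
have rank_PTc : \rank (P^T *m cokermx y) = \rank (cokermx y).
  apply/eqP; rewrite eqn_leq mxrankM_maxr /=.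
  by rewrite -{1}[cokermx y]mul1mx -mul_trQP -mulmxA mxrankM_maxr.
rewrite genmxE mxrank_ker rank_PTc mxrank_coker.
by have := leq_rows_cols; have := rank_leq_col y; lia.
Qed.

Variables (A : seq 'rV[R]_m) (B : seq 'rV[R]_n).
Variables (sigma : 'I_(size A) -> 'I_(size B)) (tau : 'I_(size B) -> 'I_(size A)).
Hypothesis A_sigma : forall i : 'I_(size A), A`_i = B`_(sigma i) *m P.
Hypothesis B_tau : forall j : 'I_(size B), B`_j *m P = A`_(tau j).

Lemma flat_pullback (T : {set 'I_(size A)}) : flat T = preimmx (flat (sigma @: T)).
Proof.
apply: genmx_ext (genmx_flat T) (genmx_preimmx _) _ => u.
rewrite sub_flat sub_preimmx sub_flat.
apply/forall_inP/forall_inP => [uA0 _ /imsetP[i iT ->]|uB0 i iT].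
  by have := uA0 i iT; rewrite A_sigma trmx_mul mulmxA.
by rewrite A_sigma trmx_mul mulmxA uB0 ?imset_f.
Qed.

Lemma preimmx_flat (T : {set 'I_(size B)}) : preimmx (flat T) = flat (tau @: T).
Proof.
apply: genmx_ext (genmx_preimmx _) (genmx_flat _) _ => u.
rewrite sub_flat sub_preimmx sub_flat.
apply/forall_inP/forall_inP => [uB0 _ /imsetP[j jT ->]|uA0 j jT].
  by have := uB0 j jT; rewrite -B_tau trmx_mul mulmxA.
by rewrite -mulmxA -trmx_mul B_tau uA0 ?imset_f.
Qed.

Lemma perm_intersection_poset_pullback :
  perm_eq (intersection_poset A) (map preimmx (intersection_poset B)).
Proof.
apply: uniq_perm; first exact: undup_uniq.
  rewrite map_inj_in_uniq ?undup_uniq // => y1 y2 Ly1 Ly2 eq_pre.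
  rewrite -(genmx_intersection_poset Ly1) -(genmx_intersection_poset Ly2).
  apply/genmxP.
  by rewrite -!submx_preimmx2 eq_pre !submx_refl.
move=> x; rewrite /intersection_poset mem_undup; apply/mapP/mapP => [[T _ ->]|[y]].
  exists (flat (sigma @: T)); last exact: flat_pullback.
  by rewrite mem_undup; apply: map_f; rewrite mem_enum in_setT.
rewrite mem_undup => /mapP[T _ ->] ->.
by exists (tau @: T); rewrite ?mem_enum ?in_setT ?preimmx_flat.
Qed.

Lemma mobius_rec_pullback f y :
  mobius_rec (intersection_poset A) f (preimmx y) = mobius_rec (intersection_poset B) f y.
Proof.
elim: f y => [//|f IH] y /=; rewrite preimmx_full; case: ifP => // _.
congr (- _); rewrite (perm_big _ perm_intersection_poset_pullback) big_map.
by apply: eq_big => z; rewrite ?ltmx_preimmx2 ?IH.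
Qed.

Lemma char_poly_arr_pullback : char_poly_arr A = 'X^(m - n) * char_poly_arr B.
Proof.
rewrite /char_poly_arr (perm_big _ perm_intersection_poset_pullback) big_map mulr_sumr.
apply: eq_bigr => y _; rewrite /mobius mobius_rec_pullback mxrank_preimmx.
have -> : m.+1 = (n.+1 + (m - n))%N by have := leq_rows_cols; lia.
rewrite mobius_rec_fuelD; last by lia.
by rewrite exprD mulrA mulrC.
Qed.

End Pullback.

Lemma decPP (P : Prop) : reflect P (Defs.decP P).
Proof. by rewrite /Defs.decP; case: excluded_middle_informative => h; constructor. Qed.

Lemma chamber_sign_eq (R : realFieldType) (m : nat) (C : seq 'rV[R]_m)
    (s : {ffun 'I_(size C) -> bool}) (i j : 'I_(size C)) :
  chamber_sign s -> C`_i = C`_j -> s i = s j.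
Proof. by move=> [x xs] eq_ij; rewrite -(xs i).2 -(xs j).2 eq_ij. Qed.

Section PullbackChambers.
Variables (R : realFieldType) (m n : nat) (P : 'M[R]_(n, m)) (Q : 'M[R]_(m, n)).
Hypothesis PQ : P *m Q = 1%:M.
Variables (A : seq 'rV[R]_m) (B : seq 'rV[R]_n).
Variables (sigma : 'I_(size A) -> 'I_(size B)) (tau : 'I_(size B) -> 'I_(size A)).
Hypothesis A_sigma : forall i : 'I_(size A), A`_i = B`_(sigma i) *m P.
Hypothesis B_tau : forall j : 'I_(size B), B`_j *m P = A`_(tau j).

Definition pullback_sign (s : {ffun 'I_(size B) -> bool}) : {ffun 'I_(size A) -> bool} :=
  [ffun i => s (sigma i)].

Lemma chamber_sign_pullback s : chamber_sign s -> chamber_sign (pullback_sign s).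
Proof.
move=> [y ys]; exists (y *m Q^T) => i.
by rewrite A_sigma trmx_mul mulmxA -(mulmxA y) (mul_trQP PQ) mulmx1 ffunE; exact: ys.
Qed.

Lemma chamber_sign_pushforward sA : chamber_sign sA ->
  exists2 sB, chamber_sign sB & sA = pullback_sign sB.
Proof.
move=> chA; have [x xs] := chA; exists [ffun j => sA (tau j)].
  exists (x *m P^T) => j; rewrite -mulmxA -trmx_mul B_tau ffunE; exact: xs.
apply/ffunP => i; rewrite !ffunE; apply: chamber_sign_eq chA _.
by rewrite -B_tau A_sigma.
Qed.

Lemma pullback_sign_inj :
  {in [set s : {ffun 'I_(size B) -> bool} | Defs.decP (chamber_sign s)] &, injective pullback_sign}.
Proof.
have B_sigma_tau j : B`_(sigma (tau j)) = B`_j.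
  by rewrite -[LHS]mulmx1 -[RHS]mulmx1 -PQ !mulmxA -A_sigma B_tau.
move=> s1 s2; rewrite !inE => /decPP ch1 /decPP ch2 eq_s; apply/ffunP => j.
rewrite -(chamber_sign_eq ch1 (B_sigma_tau j)) -(chamber_sign_eq ch2 (B_sigma_tau j)).
by move/ffunP/(_ (tau j)): eq_s; rewrite !ffunE.
Qed.

Lemma nchambers_pullback : nchambers A = nchambers B.
Proof.
rewrite /nchambers -(card_in_imset pullback_sign_inj); apply: eq_card => sA.
rewrite inE; apply/decPP/imsetP => [/chamber_sign_pushforward[sB chB ->]|[sB]].
  by exists sB; rewrite // inE; apply/decPP.
by rewrite inE => /decPP/chamber_sign_pullback ? ->.
Qed.

End PullbackChambers.

Lemma mem_diffs (R : pzRingType) (a b c n : nat) (e : 'I_n -> 'rV[R]_(a + b + c)) v :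
  reflect (exists i1 i2 : 'I_n, (i1 < i2)%N /\ v = e i1 - e i2) (v \in diffs e).
Proof.
apply: (iffP mapP) => [[[i1 i2]]|[i1 [i2 [lt_i ->]]]].
  by rewrite mem_filter /= => /andP[lt_i _] ->; exists i1, i2.
by exists (i1, i2); rewrite // mem_filter /= lt_i allpairs_f ?mem_enum.
Qed.

Lemma diffs_f (R : pzRingType) (a b c n : nat) (e : 'I_n -> 'rV[R]_(a + b + c)) (i1 i2 : 'I_n) :
  (i1 < i2)%N -> e i1 - e i2 \in diffs e.
Proof. by move=> lt_i; apply/mem_diffs; exists i1, i2. Qed.

Lemma flatten_allpairs_f (S T U V : eqType) (f : S -> T -> U -> V) s t u x y z :
  x \in s -> y \in t -> z \in u ->
  f x y z \in flatten [seq [seq f x y z | y <- t, z <- u] | x <- s].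
Proof. by move=> xs yt zu; apply/flatten_mapP; exists x => //; apply: allpairs_f. Qed.

Section Essentialization.
Variables (R : pzRingType) (p q r : nat).

Local Notation EX := (@ex R p.+1 q.+1 r).
Local Notation EY := (@ey R p.+1 q.+1 r).
Local Notation EZ := (@ez R p.+1 q.+1 r).
Local Notation X := (@ex R p q r).
Local Notation Y := (@ey R p q r).
Local Notation Z := (@ez R p q r).
Local Notation lift := (lift ord_max).

(* u *m ess_mx is the pullback of a normal vector u of H along the map
   (x, y, z) |-> (x_i - x_l1, y_j - y_l2, z_k + x_l1 + y_l2). *)
Definition ess_mx : 'M[R]_(p + q + r, p.+1 + q.+1 + r) :=
  col_mx (col_mx (\matrix_(i < p) (EX (lift i) - EX ord_max))
                 (\matrix_(j < q) (EY (lift j) - EY ord_max)))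
         (\matrix_(k < r) (EX ord_max + EY ord_max + EZ k)).

Definition ess_rinv_mx : 'M[R]_(p.+1 + q.+1 + r, p + q + r) :=
  col_mx (col_mx (\matrix_(i < p.+1) oapp X 0 (unlift ord_max i))
                 (\matrix_(j < q.+1) oapp Y 0 (unlift ord_max j)))
         (\matrix_(k < r) Z k).

Lemma X_ess i : X i *m ess_mx = EX (lift i) - EX ord_max.
Proof. by rewrite /ex -rowE rowKu rowKu rowK. Qed.
Lemma Y_ess j : Y j *m ess_mx = EY (lift j) - EY ord_max.
Proof. by rewrite /ey -rowE rowKu rowKd rowK. Qed.
Lemma Z_ess k : Z k *m ess_mx = EX ord_max + EY ord_max + EZ k.
Proof. by rewrite /ez -rowE rowKd rowK. Qed.

Lemma EX_ess_rinv i : EX i *m ess_rinv_mx = oapp X 0 (unlift ord_max i).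
Proof. by rewrite /ex -rowE rowKu rowKu rowK. Qed.
Lemma EY_ess_rinv j : EY j *m ess_rinv_mx = oapp Y 0 (unlift ord_max j).
Proof. by rewrite /ey -rowE rowKu rowKd rowK. Qed.
Lemma EZ_ess_rinv k : EZ k *m ess_rinv_mx = Z k.
Proof. by rewrite /ez -rowE rowKd rowK. Qed.

Lemma mul_ess_rinv : ess_mx *m ess_rinv_mx = 1%:M.
Proof.
apply/row_matrixP => s; rewrite row_mul row1 rowE.
case: (split_ordP s) => [s1 ->|k ->]; last first.
  by rewrite -/(Z k) Z_ess !mulmxDl EZ_ess_rinv EX_ess_rinv EY_ess_rinv !unlift_none !add0r.
case: (split_ordP s1) => [i ->|j ->].
  by rewrite -/(X i) X_ess mulmxBl !EX_ess_rinv liftK unlift_none subr0.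
by rewrite -/(Y j) Y_ess mulmxBl !EY_ess_rinv liftK unlift_none subr0.
Qed.

Lemma XYZ_ess i j k : (X i + Y j + Z k) *m ess_mx = EX (lift i) + EY (lift j) + EZ k.
Proof.
rewrite !mulmxDl X_ess Y_ess Z_ess.
by rewrite -[EX ord_max + _ + _]addrA addrACA subrK -addrA addKr addrA.
Qed.

Lemma XZ_ess i k : (X i + Z k) *m ess_mx = EX (lift i) + EY ord_max + EZ k.
Proof. by rewrite mulmxDl X_ess Z_ess -!addrA addKr. Qed.

Lemma YZ_ess j k : (Y j + Z k) *m ess_mx = EX ord_max + EY (lift j) + EZ k.
Proof.
rewrite mulmxDl Y_ess Z_ess.
by rewrite -[EX ord_max + _ + _]addrA addrCA -addrA addKr addrA (addrC (EY _)).
Qed.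

Lemma dX_ess i1 i2 : (X i1 - X i2) *m ess_mx = EX (lift i1) - EX (lift i2).
Proof. by rewrite mulmxBl !X_ess opprB addrA subrK. Qed.
Lemma dY_ess j1 j2 : (Y j1 - Y j2) *m ess_mx = EY (lift j1) - EY (lift j2).
Proof. by rewrite mulmxBl !Y_ess opprB addrA subrK. Qed.
Lemma dZ_ess k1 k2 : (Z k1 - Z k2) *m ess_mx = EZ k1 - EZ k2.
Proof. by rewrite mulmxBl !Z_ess opprD addrACA subrr add0r. Qed.

Lemma arrA_XYZ i j k : EX i + EY j + EZ k \in arrA R p.+1 q.+1 r.
Proof. by rewrite mem_cat (flatten_allpairs_f (fun i j k => EX i + EY j + EZ k)) ?mem_enum. Qed.
Lemma arrA_dX (i1 i2 : 'I_p.+1) : (i1 < i2)%N -> EX i1 - EX i2 \in arrA R p.+1 q.+1 r.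
Proof. by move=> lt_i; rewrite !mem_cat diffs_f ?orbT. Qed.
Lemma arrA_dY (j1 j2 : 'I_q.+1) : (j1 < j2)%N -> EY j1 - EY j2 \in arrA R p.+1 q.+1 r.
Proof. by move=> lt_j; rewrite !mem_cat diffs_f ?orbT. Qed.
Lemma arrA_dZ (k1 k2 : 'I_r) : (k1 < k2)%N -> EZ k1 - EZ k2 \in arrA R p.+1 q.+1 r.
Proof. by move=> lt_k; rewrite !mem_cat diffs_f ?orbT. Qed.

Lemma arrH_X i : X i \in arrH R p.+1 q.+1 r.
Proof. by rewrite !mem_cat map_f ?mem_enum. Qed.
Lemma arrH_Y j : Y j \in arrH R p.+1 q.+1 r.
Proof. by rewrite !mem_cat map_f ?mem_enum ?orbT. Qed.
Lemma arrH_Z k : Z k \in arrH R p.+1 q.+1 r.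
Proof. by rewrite !mem_cat map_f ?mem_enum ?orbT. Qed.
Lemma arrH_XZ i k : X i + Z k \in arrH R p.+1 q.+1 r.
Proof. by rewrite !mem_cat (allpairs_f (fun i k => X i + Z k)) ?mem_enum ?orbT. Qed.
Lemma arrH_YZ j k : Y j + Z k \in arrH R p.+1 q.+1 r.
Proof. by rewrite !mem_cat (allpairs_f (fun j k => Y j + Z k)) ?mem_enum ?orbT. Qed.
Lemma arrH_XYZ i j k : X i + Y j + Z k \in arrH R p.+1 q.+1 r.
Proof.
by rewrite !mem_cat (flatten_allpairs_f (fun i j k => X i + Y j + Z k)) ?mem_enum ?orbT.
Qed.
Lemma arrH_dX (i1 i2 : 'I_p) : (i1 < i2)%N -> X i1 - X i2 \in arrH R p.+1 q.+1 r.
Proof. by move=> lt_i; rewrite !mem_cat diffs_f ?orbT. Qed.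
Lemma arrH_dY (j1 j2 : 'I_q) : (j1 < j2)%N -> Y j1 - Y j2 \in arrH R p.+1 q.+1 r.
Proof. by move=> lt_j; rewrite !mem_cat diffs_f ?orbT. Qed.
Lemma arrH_dZ (k1 k2 : 'I_r) : (k1 < k2)%N -> Z k1 - Z k2 \in arrH R p.+1 q.+1 r.
Proof. by move=> lt_k; rewrite !mem_cat diffs_f ?orbT. Qed.

Local Notation ess_image := [seq h *m ess_mx | h <- arrH R p.+1 q.+1 r].

Lemma ess_image_sub_arrA : {subset ess_image <= arrA R p.+1 q.+1 r}.
Proof.
move=> _ /mapP[h hH ->]; rewrite !mem_cat in hH; move: hH.
case/orP => [/mapP[i _ ->]|]; first by rewrite X_ess arrA_dX // lift_max.
case/orP => [/mapP[j _ ->]|]; first by rewrite Y_ess arrA_dY // lift_max.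
case/orP => [/mapP[k _ ->]|]; first by rewrite Z_ess arrA_XYZ.
case/orP => [/allpairsP[[i k] [_ _ ->]]|]; first by rewrite XZ_ess arrA_XYZ.
case/orP => [/allpairsP[[j k] [_ _ ->]]|]; first by rewrite YZ_ess arrA_XYZ.
case/orP => [/flatten_mapP[i _ /allpairsP[[j k] [_ _ ->]]]|].
  by rewrite XYZ_ess arrA_XYZ.
case/orP => [/mem_diffs[i1 [i2 [lt_i ->]]]|].
  by rewrite dX_ess arrA_dX // !lift_max.
case/orP => [/mem_diffs[j1 [j2 [lt_j ->]]]|/mem_diffs[k1 [k2 [lt_k ->]]]].
  by rewrite dY_ess arrA_dY // !lift_max.
by rewrite dZ_ess arrA_dZ.
Qed.

Lemma XYZ_ess_image i j k : EX i + EY j + EZ k \in ess_image.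
Proof.
case: (unliftP ord_max i) => [i' ->|->]; case: (unliftP ord_max j) => [j' ->|->].
- by rewrite -XYZ_ess; apply/map_f/arrH_XYZ.
- by rewrite -XZ_ess; apply/map_f/arrH_XZ.
- by rewrite -YZ_ess; apply/map_f/arrH_YZ.
- by rewrite -Z_ess; apply/map_f/arrH_Z.
Qed.

Lemma dX_ess_image (i1 i2 : 'I_p.+1) : (i1 < i2)%N -> EX i1 - EX i2 \in ess_image.
Proof.
case: (unliftP ord_max i1) => [i1' ->|-> /=]; last by rewrite ltnNge -ltnS ltn_ord.
case: (unliftP ord_max i2) => [i2' -> lt_i|-> _]; last by rewrite -X_ess; apply/map_f/arrH_X.
by rewrite -dX_ess; apply/map_f/arrH_dX; rewrite -(lift_max i1') -(lift_max i2').
Qed.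

Lemma dY_ess_image (j1 j2 : 'I_q.+1) : (j1 < j2)%N -> EY j1 - EY j2 \in ess_image.
Proof.
case: (unliftP ord_max j1) => [j1' ->|-> /=]; last by rewrite ltnNge -ltnS ltn_ord.
case: (unliftP ord_max j2) => [j2' -> lt_j|-> _]; last by rewrite -Y_ess; apply/map_f/arrH_Y.
by rewrite -dY_ess; apply/map_f/arrH_dY; rewrite -(lift_max j1') -(lift_max j2').
Qed.

Lemma arrA_sub_ess_image : {subset arrA R p.+1 q.+1 r <= ess_image}.
Proof.
move=> v; rewrite !mem_cat.
case/orP => [/flatten_mapP[i _ /allpairsP[[j k] [_ _ ->]]]|]; first exact: XYZ_ess_image.
case/orP => [/mem_diffs[i1 [i2 [lt_i ->]]]|]; first exact: dX_ess_image.
case/orP => [/mem_diffs[j1 [j2 [lt_j ->]]]|/mem_diffs[k1 [k2 [lt_k ->]]]].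
  exact: dY_ess_image.
by rewrite -dZ_ess; apply/map_f/arrH_dZ.
Qed.

End Essentialization.

Theorem lemma5p7 (R : realFieldType) (l1 l2 l3 : nat) :
  (0 < l1)%N -> (0 < l2)%N -> (0 < l3)%N ->
  char_poly_arr (arrA R l1 l2 l3) = 'X^2 * char_poly_arr (arrH R l1 l2 l3) /\
  nchambers (arrA R l1 l2 l3) = nchambers (arrH R l1 l2 l3).
Proof.
case: l1 => [//|p] _; case: l2 => [//|q] _ _.
have PQ := mul_ess_rinv R p q l3.
have [sigma A_sigma] := pullback_index (@arrA_sub_ess_image R p q l3).
have [tau H_tau] := pushforward_index (@ess_image_sub_arrA R p q l3).
split; last by apply: (nchambers_pullback PQ); [exact: A_sigma | exact: H_tau].
rewrite (char_poly_arr_pullback PQ A_sigma H_tau); congr ('X^_ * _); lia.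
Qed.
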